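(* Let $\Omega\subseteq\mathbb{R}^n$ be bounded and measurable, $Y$ a Hilbert space, $S:L^2(\Omega)\to Y$ linear and continuous, $z\in Y$, $u_a,u_b\in L^\infty(\Omega)$, $u_a\le u_b$, $U_{\mathrm{ad}}=\{u\in L^2(\Omega):u_a\le u\le u_b\text{ a.e.}\}$. Let $u^\dagger$ be a solution of $\min_{u\in U_{\mathrm{ad}}}\frac12\|Su-z\|_Y^2$ such that there exists $w\in Y$ with $u^\dagger=P_{U_{\mathrm{ad}}}(S^\ast w)$. Let $(\varepsilon_k)_k$ be positive reals with $\sum_{i=1}^\infty R_i<\infty$, where $R_i:=\frac{\varepsilon_i}{\alpha_i}+\frac{\varepsilon_i^2}{\alpha_i^2}+\frac{\gamma_{i-1}\varepsilon_i}{\alpha_i}+\frac{\varepsilon_i^2}{\alpha_i}$. Assume $S_h=S$ and let $(u_k^{\mathrm{in}})_k$ be generated by the inexact Bregman algorithm in the context. Then $u_k^{\mathrm{in}}\to u^\dagger$ in $L^2(\Omega)$.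
   Context: $\|\cdot\|,(\cdot,\cdot)$: $L^2(\Omega)$ norm and inner product; $P_{U_{\mathrm{ad}}}$: $L^2$-projection onto $U_{\mathrm{ad}}$. $(\alpha_k)_k$ is a bounded sequence of positive reals, $\gamma_k:=\sum_{j=1}^k\alpha_j^{-1}$, $\gamma_0=0$. Define $\mathcal B(\alpha,\lambda,u):=(1+\frac1\alpha)\|u-P_{U_{\mathrm{ad}}}(\frac1\alpha S_h^\ast(z-S_hu)+\lambda)\|$ (here with $S_h=S$). Inexact Bregman algorithm: $u_0^{\mathrm{in}}=P_{U_{\mathrm{ad}}}(0)$, $\lambda_0^{\mathrm{in}}=0$; for $k=1,2,\dots$ find $u_k^{\mathrm{in}}\in U_{\mathrm{ad}}$ with $\mathcal B(\alpha_k,\lambda_{k-1}^{\mathrm{in}},u_k^{\mathrm{in}})\le\varepsilon_k$, then set $\lambda_k^{\mathrm{in}}=\sum_{i=1}^k\frac1{\alpha_i}S_h^\ast(z-S_hu_i^{\mathrm{in}})$. *)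

From HB Require Import structures.
From mathcomp Require Import all_boot all_order all_algebra.
From mathcomp Require Import all_classical all_reals all_analysis.
Set Implicit Arguments. Unset Strict Implicit. Unset Printing Implicit Defensive.
Import Order.TTheory GRing.Theory Num.Theory.
Import numFieldNormedType.Exports.
Local Open Scope classical_set_scope.
Local Open Scope ring_scope.

Section L2defs.
Context {d : measure_display} {T : measurableType d} {R : realType}.
Variable mu : {measure set T -> \bar R}.

Definition inL2 (f : T -> R) : Prop :=
  measurable_fun setT f /\ ('N[mu]_(2%:E)[EFin \o f] < +oo)%E.

Definition L2norm (f : T -> R) : R := fine ('N[mu]_(2%:E)[EFin \o f]).

Definition L2inner (f g : T -> R) : R := fine (\int[mu]_x (f x * g x)%:E).

Definition inLinfty (f : T -> R) : Prop :=
  measurable_fun setT f /\ exists M : R, {ae mu, forall x, `|f x| <= M}.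

Definition Uad (ua ub : T -> R) : set (T -> R) :=
  [set u | inL2 u /\ {ae mu, forall x, ua x <= u x <= ub x}].

Definition is_L2proj (U : set (T -> R)) (v p : T -> R) : Prop :=
  U p /\ forall q, U q -> L2norm (fun x => v x - p x) <= L2norm (fun x => v x - q x).

End L2defs.

(* A real Hilbert space: a complete normed space whose norm comes from an
   inner product. *)
Definition is_inner_product {R : realType} {Y : normedModType R}
  (ip : Y -> Y -> R) : Prop :=
  (forall x y, ip x y = ip y x) /\
  (forall a x y z, ip (a *: x + y) z = a * ip x z + ip y z) /\
  (forall x, ip x x = `|x| ^+ 2).

Definition L2_bounded_linear {d} {T : measurableType d} {R : realType}
  (mu : {measure set T -> \bar R}) {Y : normedModType R} (S : (T -> R) -> Y) : Prop :=
  (forall a f g, inL2 mu f -> inL2 mu g ->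
     S (fun x => a * f x + g x) = a *: S f + S g) /\
  (exists C : R, forall f, inL2 mu f -> `|S f| <= C * L2norm mu f).

Definition is_adjoint {d} {T : measurableType d} {R : realType}
  (mu : {measure set T -> \bar R}) {Y : normedModType R} (ip : Y -> Y -> R)
  (S : (T -> R) -> Y) (Sadj : Y -> (T -> R)) : Prop :=
  forall w, inL2 mu (Sadj w) /\
    forall u, inL2 mu u -> L2inner mu (Sadj w) u = ip w (S u).

Definition gammaseq {R : realType} (alpha : nat -> R) (k : nat) : R :=
  \sum_(1 <= j < k.+1) (alpha j)^-1.

Definition Rterm {R : realType} (alpha eps : nat -> R) (i : nat) : R :=
  eps i / alpha i + (eps i) ^+ 2 / (alpha i) ^+ 2
  + gammaseq alpha i.-1 * eps i / alpha i + (eps i) ^+ 2 / alpha i.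

Definition lambdaseq {d} {T : measurableType d} {R : realType} {Y : normedModType R}
  (S : (T -> R) -> Y) (Sadj : Y -> (T -> R)) (z : Y) (alpha : nat -> R)
  (u : nat -> (T -> R)) (k : nat) : T -> R :=
  fun x => \sum_(1 <= i < k.+1) (alpha i)^-1 * Sadj (z - S (u i)) x.

Definition B_le {d} {T : measurableType d} {R : realType}
  (mu : {measure set T -> \bar R}) {Y : normedModType R}
  (U : set (T -> R)) (S : (T -> R) -> Y) (Sadj : Y -> (T -> R)) (z : Y)
  (alpha : R) (lam u : T -> R) (eps : R) : Prop :=
  exists p, is_L2proj mu U (fun x => alpha^-1 * Sadj (z - S u) x + lam x) p /\
    (1 + alpha^-1) * L2norm mu (fun x => u x - p x) <= eps.

From HB Require Import structures.
From mathcomp Require Import all_boot all_order all_algebra.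
From mathcomp Require Import all_classical all_reals all_analysis.
From mathcomp Require Import ring lra.
Import Order.TTheory GRing.Theory Num.Theory.
Import numFieldNormedType.Exports.
Local Open Scope classical_set_scope.
Local Open Scope ring_scope.

(* Let P_k be the projection of lambda_k onto U_ad, so that ||u_k - P_k|| <= eps_k,
   and let eta_k := sum_(i <= k) alpha_i^-1 S (u^dagger - u_i) - w.  The projection
   inequalities for P_k and for u^dagger = P(S^* w), together with first-order
   optimality of u^dagger, give ||P_k - u^dagger||^2 <= (eta_k, S (P_k - u^dagger)).
   Since eta_(k-1) = eta_k - alpha_k^-1 S (u^dagger - u_k), expanding ||eta_(k-1)||^2
   yields the energy estimate
     ||eta_k||^2 + 2 alpha_k^-1 ||P_k - u^dagger||^2
       <= ||eta_(k-1)||^2 + 2 ||S|| alpha_k^-1 eps_k ||eta_k||.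
   Summability of alpha_k^-1 eps_k keeps eta bounded, so that, alpha being bounded,
   sum_k ||P_k - u^dagger||^2 < oo.  Finally
   ||u_k - u^dagger||^2 <= 2 eps_k^2 + 2 ||P_k - u^dagger||^2 and
   eps_k^2 <= (sup alpha) R_k -> 0. *)

Section RealSequences.
Variable R : realType.

Lemma le0_of_forall_le_mul (x c : R) :
  0 <= c -> (forall t, 0 < t -> t <= 1 -> x <= t * c) -> x <= 0.
Proof.
move=> c0 H; rewrite leNgt; apply/negP => x0.
have xc : 0 < x + c by rewrite ltr_wpDr.
have := H (x / (x + c)).
rewrite divr_gt0 // ler_pdivrMr // mul1r lerDl c0 => /(_ isT isT).
rewrite mulrAC ler_pdivlMr // => h.
have : x * x <= 0 by rewrite -(lerD2r (x * c)) add0r -mulrDr.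
by rewrite leNgt mulr_gt0.
Qed.

Lemma series_shiftS (u : nat -> R) :
  series (fun i => u i.+1) = [sequence \sum_(1 <= i < N.+1) u i]_N.
Proof. by apply/funext => n; rewrite /series /= big_add1. Qed.

Lemma partial_sums_cvg_cvg0 (u : nat -> R) :
  cvg ([sequence \sum_(1 <= i < N.+1) u i]_N @ \oo) -> u @ \oo --> 0.
Proof.
by move=> su; rewrite -cvg_shiftS; apply: cvg_series_cvg_0; rewrite series_shiftS.
Qed.

Lemma cvg0_of_bounded_partial_sums (c : nat -> R) (B : R) :
  (forall k, 0 <= c k) -> (forall n, \sum_(1 <= k < n.+1) c k <= B) ->
  c @ \oo --> 0.
Proof.
move=> c_ge0 c_sum; apply: partial_sums_cvg_cvg0; rewrite -series_shiftS.
apply: nondecreasing_is_cvgn.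
  by apply/nondecreasing_seqP => n; rewrite /series /= big_nat_recr //= lerDl.
by exists B => _ [n _ <-]; rewrite (series_shiftS c); apply: c_sum.
Qed.

Lemma cvg0_of_sqr_le (x y : nat -> R) :
  (forall k, 0 <= x k) -> (\forall k \near \oo, x k ^+ 2 <= y k) ->
  y @ \oo --> 0 -> x @ \oo --> 0.
Proof.
move=> x_ge0 xy y0; apply/cvgr0Pnorm_lt => e e0.
have y_small := cvgr0_norm_lt _ y0 _ (exprn_gt0 2 e0).
near=> k; rewrite ger0_norm //.
have : x k ^+ 2 <= y k by near: k.
have : `|y k| < e ^+ 2 by near: k; exact: y_small.
have := x_ge0 k; have := ler_norm (y k); nra.
Unshelve. all: by end_near.
Qed.

Lemma ler_addr_of_sqr_le (x y t : R) : 0 <= y -> 0 <= t ->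
  x ^+ 2 <= y ^+ 2 + 2 * t * x -> x <= y + 2 * t.
Proof.
move=> y0 t0 sq; rewrite leNgt; apply/negP => lt.
have : 0 < (x - y - 2 * t) * x by rewrite mulr_gt0 //; lra.
have : 0 <= (x - y) * y by rewrite mulr_ge0 //; lra.
nra.
Qed.

Section Descent.
Variables (a beta b c : nat -> R) (M B : R).
Hypothesis M_ge0 : 0 <= M.
Hypothesis beta_ge : forall {k}, (1 <= k)%N -> 1 <= M * beta k.
Hypothesis a_ge0 : forall k, 0 <= a k.
Hypothesis b_ge0 : forall {k}, (1 <= k)%N -> 0 <= b k.
Hypothesis c_ge0 : forall k, 0 <= c k.
Hypothesis b_sum : forall n, \sum_(1 <= k < n.+1) b k <= B.
Hypothesis descent : forall {k}, (1 <= k)%N ->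
  a k ^+ 2 + 2 * beta k * c k <= a k.-1 ^+ 2 + 2 * b k * a k.

Lemma descent_step {k} : (1 <= k)%N -> a k <= a k.-1 + 2 * b k.
Proof.
move=> k1; apply: ler_addr_of_sqr_le (a_ge0 _) (b_ge0 k1) _.
have beta_ge0 : 0 <= beta k.
  rewrite leNgt; apply/negP => /ltW /(mulr_ge0_le0 M_ge0).
  by have := beta_ge k1; lra.
by have := descent k1; have := mulr_ge0 beta_ge0 (c_ge0 k); nra.
Qed.

Lemma descent_bounded k : a k <= a 0%N + 2 * B.
Proof.
suff : a k <= a 0%N + 2 * \sum_(1 <= i < k.+1) b i.
  by move/le_trans; apply; rewrite lerD2l ler_pM2l ?b_sum.
elim: k => [|k IH]; first by rewrite big_geq // mulr0 addr0.
rewrite big_nat_recr //= mulrDr addrA.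
by apply: le_trans (descent_step (ltn0Sn k)) _; rewrite lerD2r.
Qed.

Lemma descent_telescope n :
  2 * \sum_(1 <= k < n.+1) beta k * c k + a n ^+ 2 <=
  a 0%N ^+ 2 + 2 * (a 0%N + 2 * B) * \sum_(1 <= k < n.+1) b k.
Proof.
elim: n => [|n IH]; first by rewrite !big_geq // !mulr0 add0r addr0.
have /= := descent (ltn0Sn n).
have := ler_wpM2l (b_ge0 (ltn0Sn n)) (descent_bounded n.+1).
rewrite !(big_nat_recr n.+1 1) //=; nra.
Qed.

Lemma descent_cvg0 : c @ \oo --> 0.
Proof.
set A := a 0%N + 2 * B.
have A_ge0 : 0 <= A := le_trans (a_ge0 0) (descent_bounded 0).
apply: (@cvg0_of_bounded_partial_sums _ (M * ((a 0%N ^+ 2 + 2 * A * B) / 2))) => // n.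
apply: (@le_trans _ _ (M * \sum_(1 <= k < n.+1) beta k * c k)).
  rewrite mulr_sumr big_nat_cond [leRHS]big_nat_cond.
  apply: ler_sum => k /andP[/andP[k1 _] _].
  by rewrite mulrA ler_peMl // beta_ge.
apply: ler_wpM2l => //.
have := descent_telescope n; have := ler_wpM2l A_ge0 (b_sum n).
have := sqr_ge0 (a n); rewrite -/A; nra.
Qed.

End Descent.
End RealSequences.

Section InnerProduct.
Context {R : realType} {Y : normedModType R} {ip : Y -> Y -> R}.
Hypothesis ip_inner : is_inner_product ip.

Lemma ipC x y : ip x y = ip y x.
Proof. by case: ip_inner. Qed.

Lemma ip_norm x : ip x x = `|x| ^+ 2.
Proof. by case: ip_inner => _ []. Qed.

Lemma ip_linl a x y z : ip (a *: x + y) z = a * ip x z + ip y z.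
Proof. by case: ip_inner => _ []. Qed.

Lemma ip0l z : ip 0 z = 0.
Proof. by have := ip_linl 1 0 0 z; rewrite scaler0 addr0 mul1r; lra. Qed.

Lemma ipDl x y z : ip (x + y) z = ip x z + ip y z.
Proof. by rewrite -[x in LHS]scale1r ip_linl mul1r. Qed.

Lemma ipZl a x z : ip (a *: x) z = a * ip x z.
Proof. by rewrite -[a *: x]addr0 ip_linl ip0l addr0. Qed.

Lemma ipNl x z : ip (- x) z = - ip x z.
Proof. by rewrite -scaleN1r ipZl mulN1r. Qed.

Lemma ipBl x y z : ip (x - y) z = ip x z - ip y z.
Proof. by rewrite ipDl ipNl. Qed.

Lemma ipDr x y z : ip z (x + y) = ip z x + ip z y.
Proof. by rewrite ipC ipDl !(ipC z). Qed.

Lemma ipZr a x z : ip z (a *: x) = a * ip z x.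
Proof. by rewrite ipC ipZl ipC. Qed.

Lemma ipNr x z : ip z (- x) = - ip z x.
Proof. by rewrite ipC ipNl ipC. Qed.

Lemma ip_suml (I : Type) (r : seq I) (P : pred I) (F : I -> Y) z :
  ip (\sum_(i <- r | P i) F i) z = \sum_(i <- r | P i) ip (F i) z.
Proof. exact: (big_morph (ip^~ z) (fun x y => ipDl x y z) (ip0l z)). Qed.

Lemma ip_le_norm x y : ip x y <= `|x| * `|y|.
Proof.
have h := ip_norm (x + y).
rewrite ipDl !ipDr !ip_norm (ipC y x) in h.
have : `|x + y| ^+ 2 <= (`|x| + `|y|) ^+ 2.
  by rewrite ler_sqr ?nnegrE ?addr_ge0 // ler_normD.
rewrite -h; lra.
Qed.

Lemma sqr_normDZ x y (t : R) :
  `|x + t *: y| ^+ 2 = `|x| ^+ 2 + 2 * t * ip x y + t ^+ 2 * `|y| ^+ 2.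
Proof. by rewrite -!ip_norm ipDl !ipDr !ipZl !ipZr (ipC y x); ring. Qed.

End InnerProduct.

Section L2.
Context {d : measure_display} {T : measurableType d} {R : realType}.
Context {mu : {measure set T -> \bar R}}.
Implicit Types (f g h p q v : T -> R) (U : set (T -> R)).

Lemma inL2P f : inL2 mu f <-> f \in Lfun mu 2%:E.
Proof.
split; first by case=> mf nf; apply/andP; split; rewrite inE.
by move=> /andP[]; rewrite !inE /= => mf nf; split.
Qed.

Lemma inL2_0 : inL2 mu (fun _ => 0).
Proof. by apply/inL2P; have [] := Lfun_submod_closed mu (lee1n 2). Qed.

Lemma inL2_lin (a : R) {f g} : inL2 mu f -> inL2 mu g ->
  inL2 mu (fun x => a * f x + g x).
Proof.
move=> /inL2P hf /inL2P hg; apply/inL2P.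
by have [_] := Lfun_submod_closed mu (lee1n 2); apply.
Qed.

Lemma inL2_sub {f g} : inL2 mu f -> inL2 mu g -> inL2 mu (fun x => f x - g x).
Proof.
move=> hf hg; have := inL2_lin (-1) hg hf.
by congr inL2; apply/funext => x; rewrite mulN1r addrC.
Qed.

Lemma inL2_scale (a : R) {f} : inL2 mu f -> inL2 mu (fun x => a * f x).
Proof.
move=> hf; have := inL2_lin a hf inL2_0.
by congr inL2; apply/funext => x; rewrite addr0.
Qed.

Lemma inL2_mul_integrable {f g} : inL2 mu f -> inL2 mu g ->
  mu.-integrable setT (fun x => (f x * g x)%:E).
Proof. by move=> /inL2P hf /inL2P hg; exact/Lfun1_integrable/Lfun2_mul_Lfun1. Qed.

Lemma L2innerC f g : L2inner mu f g = L2inner mu g f.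
Proof. by rewrite /L2inner; under eq_integral do rewrite mulrC. Qed.

Lemma L2inner_linl (a : R) {f g h} : inL2 mu f -> inL2 mu g -> inL2 mu h ->
  L2inner mu (fun x => a * f x + g x) h = a * L2inner mu f h + L2inner mu g h.
Proof.
move=> hf hg hh; rewrite /L2inner.
have i1 := inL2_mul_integrable hf hh; have i2 := inL2_mul_integrable hg hh.
have i1' : mu.-integrable setT (fun x => (a * (f x * h x))%:E).
  by under eq_fun do rewrite EFinM; exact: integrableZl.
under eq_integral do rewrite mulrDl -mulrA EFinD.
rewrite integralD //; under eq_integral do rewrite EFinM.
rewrite integralZl // fineD ?fin_numM ?integrable_fin_num //.
by rewrite fineM ?integrable_fin_num.
Qed.

Lemma L2inner_scalel (a : R) {f h} : inL2 mu f -> inL2 mu h ->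
  L2inner mu (fun x => a * f x) h = a * L2inner mu f h.
Proof.
move=> hf hh; have := L2inner_linl a hf inL2_0 hh.
rewrite /L2inner; under eq_integral do rewrite addr0.
by under [X in _ + fine X]eq_integral do rewrite mul0r; rewrite integral0 addr0.
Qed.

Lemma L2inner_scaler (a : R) {f h} : inL2 mu f -> inL2 mu h ->
  L2inner mu h (fun x => a * f x) = a * L2inner mu h f.
Proof. by move=> hf hh; rewrite L2innerC L2inner_scalel // L2innerC. Qed.

Lemma L2inner_subl {f g h} : inL2 mu f -> inL2 mu g -> inL2 mu h ->
  L2inner mu (fun x => f x - g x) h = L2inner mu f h - L2inner mu g h.
Proof.
move=> hf hg hh; have := L2inner_linl (-1) hg hf hh; rewrite mulN1r addrC => <-.
by congr L2inner; apply/funext => x; rewrite mulN1r addrC.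
Qed.

Lemma L2inner_subr {f g h} : inL2 mu f -> inL2 mu g -> inL2 mu h ->
  L2inner mu h (fun x => f x - g x) = L2inner mu h f - L2inner mu h g.
Proof. by move=> *; rewrite L2innerC L2inner_subl // !(L2innerC h). Qed.

Lemma L2norm_ge0 f : 0 <= L2norm mu f.
Proof. by rewrite /L2norm fine_ge0 // Lnorm_ge0. Qed.

Lemma L2norm_sqr {f} : inL2 mu f -> L2norm mu f ^+ 2 = L2inner mu f f.
Proof.
move=> [mf nf]; rewrite /L2norm /L2inner.
have fN : ('N[mu]_(2%:E)[EFin \o f])%E \is a fin_num.
  by rewrite ge0_fin_numE // Lnorm_ge0.
have two_neq0 : (2 : R) != 0 by rewrite pnatr_eq0.
have := poweR_Lnorm mu (EFin \o f) two_neq0.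
rewrite -(fineK fN) poweR_EFin powR_mulrn ?fine_ge0 ?Lnorm_ge0 // => E.
apply: EFin_inj; rewrite E.
have fi : (\int[mu]_x (f x * f x)%:E)%E \is a fin_num.
  by apply: integrable_fin_num => //; apply: inL2_mul_integrable.
rewrite fineK //; apply: eq_integral => x _ /=.
by rewrite powR_mulrn // real_normK ?num_real // expr2.
Qed.

Lemma L2norm_sqr_subZ {f g} (t : R) : inL2 mu f -> inL2 mu g ->
  L2norm mu (fun x => f x - t * g x) ^+ 2 =
  L2norm mu f ^+ 2 - 2 * t * L2inner mu f g + t ^+ 2 * L2norm mu g ^+ 2.
Proof.
move=> hf hg; have htg := inL2_scale t hg; have hd := inL2_sub hf htg.
rewrite (L2norm_sqr hd) (L2norm_sqr hf) (L2norm_sqr hg) (L2inner_subl hf htg hd).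
rewrite !L2inner_subr // !L2inner_scalel // !L2inner_scaler // (L2innerC g f); ring.
Qed.

Lemma L2norm_sqr_sub_le {f g h} : inL2 mu f -> inL2 mu g -> inL2 mu h ->
  L2norm mu (fun x => f x - h x) ^+ 2 <=
  2 * L2norm mu (fun x => f x - g x) ^+ 2 + 2 * L2norm mu (fun x => g x - h x) ^+ 2.
Proof.
move=> hf hg hh; have hfg := inL2_sub hf hg; have hgh := inL2_sub hg hh.
have := L2norm_sqr_subZ (-1) hfg hgh; have := L2norm_sqr_subZ 1 hfg hgh.
have -> : (fun x => f x - g x - -1 * (g x - h x)) = (fun x => f x - h x).
  by apply/funext => x; ring.
have := sqr_ge0 (L2norm mu (fun x => f x - g x - 1 * (g x - h x))); lra.
Qed.

Definition convex_fun_set U := forall p q (t : R), 0 <= t -> t <= 1 ->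
  U p -> U q -> U (fun x => t * (q x - p x) + p x).

Lemma L2proj_VI {U v p q} : (forall u, U u -> inL2 mu u) -> convex_fun_set U ->
  inL2 mu v -> is_L2proj mu U v p -> U q ->
  L2inner mu (fun x => v x - p x) (fun x => q x - p x) <= 0.
Proof.
move=> U_L2 U_convex hv [Up p_min] Uq.
have hp := U_L2 _ Up; have hq := U_L2 _ Uq.
have hvp := inL2_sub hv hp; have hqp := inL2_sub hq hp.
apply: (@le0_of_forall_le_mul _ _ (L2norm mu (fun x => q x - p x) ^+ 2 / 2)).
  by rewrite divr_ge0 // sqr_ge0.
move=> t t0 t1; have := p_min _ (U_convex _ _ _ (ltW t0) t1 Up Uq).
have -> : (fun x => v x - (t * (q x - p x) + p x)) =
          (fun x => (v x - p x) - t * (q x - p x)) by apply/funext => x; ring.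
rewrite -ler_sqr ?nnegrE ?L2norm_ge0 // L2norm_sqr_subZ //; nra.
Qed.

Lemma Uad_inL2 (ua ub u : T -> R) : Uad mu ua ub u -> inL2 mu u.
Proof. by case. Qed.

Lemma Uad_convex (ua ub : T -> R) : convex_fun_set (Uad mu ua ub).
Proof.
move=> p q t t0 t1 [hp ap] [hq aq]; split; first exact: inL2_lin (inL2_sub hq hp) hp.
by apply: filterS2 ap aq => x /andP[p1 p2] /andP[q1 q2]; apply/andP; split; nra.
Qed.

End L2.

Section Rterm.
Context {R : realType} {alpha eps : nat -> R}.
Hypothesis alpha_gt0 : forall {k}, (1 <= k)%N -> 0 < alpha k.
Hypothesis eps_gt0 : forall {k}, (1 <= k)%N -> 0 < eps k.

Lemma gammaseq_ge0 k : 0 <= gammaseq alpha k.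
Proof.
rewrite /gammaseq big_nat_cond; apply: sumr_ge0 => i /andP[/andP[i1 _] _].
by rewrite invr_ge0 ltW // alpha_gt0.
Qed.

Lemma Rterm_ge_div {k} : (1 <= k)%N -> (alpha k)^-1 * eps k <= Rterm alpha eps k.
Proof.
move=> k1; have a0 := ltW (alpha_gt0 k1); have e0 := ltW (eps_gt0 k1).
rewrite /Rterm mulrC -!addrA lerDl.
by rewrite !addr_ge0 ?divr_ge0 ?mulr_ge0 ?sqr_ge0 ?gammaseq_ge0.
Qed.

Lemma Rterm_ge0 {k} : (1 <= k)%N -> 0 <= Rterm alpha eps k.
Proof.
move=> k1; apply: le_trans _ (Rterm_ge_div k1).
by rewrite mulr_ge0 ?invr_ge0 ?(ltW (alpha_gt0 k1)) ?(ltW (eps_gt0 k1)).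
Qed.

Lemma sqr_eps_le_Rterm (M : R) {k} : (1 <= k)%N -> alpha k <= M ->
  eps k ^+ 2 <= M * Rterm alpha eps k.
Proof.
move=> k1 aM; have a0 := ltW (alpha_gt0 k1); have e0 := ltW (eps_gt0 k1).
have -> : eps k ^+ 2 = alpha k * (eps k ^+ 2 / alpha k).
  by rewrite mulrCA divff ?mulr1 // gt_eqF ?alpha_gt0.
apply: ler_pM; rewrite ?divr_ge0 ?sqr_ge0 //.
by rewrite /Rterm lerDr !addr_ge0 ?divr_ge0 ?mulr_ge0 ?sqr_ge0 ?gammaseq_ge0.
Qed.

Lemma partial_sums_div_bounded :
  cvg ([sequence \sum_(1 <= i < N.+1) Rterm alpha eps i]_N @ \oo) ->
  exists L, forall n, \sum_(1 <= i < n.+1) (alpha i)^-1 * eps i <= L.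
Proof.
move=> Rsum; exists (limn [sequence \sum_(1 <= i < N.+1) Rterm alpha eps i]_N) => n.
apply: le_trans (nondecreasing_cvgn_le _ Rsum n).
  rewrite big_nat_cond [leRHS]big_nat_cond.
  by apply: ler_sum => i /andP[/andP[i1 _] _]; exact: Rterm_ge_div.
by apply/nondecreasing_seqP => m; rewrite /= [leRHS]big_nat_recr //= lerDl Rterm_ge0.
Qed.

End Rterm.

Section InexactBregman.
Context {d : measure_display} {T : measurableType d} {R : realType}.
Context {mu : {measure set T -> \bar R}} {Y : normedModType R}.
Context {ip : Y -> Y -> R} {S : (T -> R) -> Y} {Sadj : Y -> T -> R} {z : Y}.
Hypothesis ip_inner : is_inner_product ip.
Hypothesis S_linear : forall a {f g}, inL2 mu f -> inL2 mu g ->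
  S (fun x => a * f x + g x) = a *: S f + S g.
Hypothesis Sadj_adjoint : is_adjoint mu ip S Sadj.

Lemma S_sub {f g} : inL2 mu f -> inL2 mu g -> S (fun x => f x - g x) = S f - S g.
Proof.
move=> hf hg; have := S_linear (-1) hg hf; rewrite scaleN1r addrC => <-.
by congr S; apply/funext => x; rewrite mulN1r addrC.
Qed.

Context {alpha : nat -> R} {uin : nat -> T -> R}.
Local Notation lam := (lambdaseq S Sadj z alpha uin).

Lemma lambdaseq0 : lam 0 = fun _ => 0.
Proof. by apply/funext => x; rewrite /lambdaseq big_geq. Qed.

Lemma lambdaseqS k :
  lam k.+1 = (fun x => (alpha k.+1)^-1 * Sadj (z - S (uin k.+1)) x + lam k x).
Proof. by apply/funext => x; rewrite /lambdaseq big_nat_recr //= addrC. Qed.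

Lemma inL2_lambdaseq k : inL2 mu (lam k).
Proof.
elim: k => [|k IH]; first by rewrite lambdaseq0; exact: inL2_0.
by rewrite lambdaseqS; apply: inL2_lin => //; exact: (Sadj_adjoint _).1.
Qed.

Lemma L2inner_lambdaseq k {h} : inL2 mu h ->
  L2inner mu (lam k) h = \sum_(1 <= i < k.+1) (alpha i)^-1 * ip (z - S (uin i)) (S h).
Proof.
move=> hh; elim: k => [|k IH].
  rewrite big_geq // lambdaseq0 /L2inner.
  by under eq_integral do rewrite mul0r; rewrite integral0.
rewrite lambdaseqS (L2inner_linl _ (Sadj_adjoint _).1 (inL2_lambdaseq k) hh).
by rewrite big_nat_recr //= IH (Sadj_adjoint _).2 // addrC.
Qed.

Context {U : set (T -> R)} {udag : T -> R} {w : Y}.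
Hypothesis U_L2 : forall {u}, U u -> inL2 mu u.
Hypothesis U_convex : convex_fun_set U.
Hypothesis udag_in : U udag.
Hypothesis udag_min : forall {u}, U u -> `|S udag - z| <= `|S u - z|.
Hypothesis source : is_L2proj mu U (Sadj w) udag.
Hypothesis alpha_gt0 : forall {k}, (1 <= k)%N -> 0 < alpha k.

Lemma udag_VI {q} : U q -> ip (z - S udag) (S q - S udag) <= 0.
Proof.
move=> Uq; have hq := U_L2 Uq; have hdag := U_L2 udag_in.
apply: (@le0_of_forall_le_mul _ _ (`|S q - S udag| ^+ 2 / 2)).
  by rewrite divr_ge0 // sqr_ge0.
move=> t t0 t1; have := udag_min (U_convex _ _ _ (ltW t0) t1 udag_in Uq).
rewrite (S_linear _ (inL2_sub hq hdag) hdag) (S_sub hq hdag) -addrA addrC.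
rewrite -ler_sqr ?nnegrE //.
rewrite (sqr_normDZ ip_inner) -opprB (ipNl ip_inner); nra.
Qed.

Definition eta k : Y := \sum_(1 <= i < k.+1) (alpha i)^-1 *: (S udag - S (uin i)) - w.

Lemma etaS k : eta k.+1 = eta k + (alpha k.+1)^-1 *: (S udag - S (uin k.+1)).
Proof. by rewrite /eta big_nat_recr //= addrAC. Qed.

Lemma L2inner_lambdaseq_source k {h} : inL2 mu h ->
  L2inner mu (lam k) h - L2inner mu (Sadj w) h =
  gammaseq alpha k * ip (z - S udag) (S h) + ip (eta k) (S h).
Proof.
move=> hh; rewrite L2inner_lambdaseq // (Sadj_adjoint w).2 // /eta.
rewrite [ip (_ - w) _](ipBl ip_inner) (ip_suml ip_inner) /gammaseq mulr_suml.
rewrite addrA -big_split /=.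
congr (_ - _); apply: eq_bigr => i _.
by rewrite (ipZl ip_inner) -mulrDr -(ipDl ip_inner) addrA subrK.
Qed.

Lemma L2proj_lambdaseq_le {k p} : is_L2proj mu U (lam k) p ->
  L2norm mu (fun x => p x - udag x) ^+ 2 <= ip (eta k) (S p - S udag).
Proof.
move=> Pp; have Up := Pp.1; have hp := U_L2 Up; have hdag := U_L2 udag_in.
have hw := (Sadj_adjoint w).1; have hl := inL2_lambdaseq k.
have hpd := inL2_sub hp hdag; have hdp := inL2_sub hdag hp.
have VI1 := L2proj_VI (@U_L2) U_convex hl Pp udag_in.
have VI2 := L2proj_VI (@U_L2) U_convex hw source Up.
have := L2inner_lambdaseq_source k hpd; rewrite S_sub //.
have := mulr_ge0_le0 (gammaseq_ge0 (@alpha_gt0) k) (udag_VI Up).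
move: VI1 VI2; rewrite L2norm_sqr // !L2inner_subl // !L2inner_subr //.
rewrite !(L2innerC udag p); lra.
Qed.

Context {C : R}.
Hypothesis C_ge0 : 0 <= C.
Hypothesis S_bounded : forall {f}, inL2 mu f -> `|S f| <= C * L2norm mu f.

Lemma eta_descent {k p} {e : R} : (1 <= k)%N -> is_L2proj mu U (lam k) p ->
  inL2 mu (uin k) -> L2norm mu (fun x => uin k x - p x) <= e ->
  `|eta k| ^+ 2 + 2 * (alpha k)^-1 * L2norm mu (fun x => p x - udag x) ^+ 2 <=
  `|eta k.-1| ^+ 2 + 2 * (C * ((alpha k)^-1 * e)) * `|eta k|.
Proof.
case: k => [//|k] k1 Pp hu pe /=; set a := (alpha k.+1)^-1.
have a0 : 0 < a by rewrite invr_gt0 alpha_gt0.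
have hp := U_L2 Pp.1; have hdag := U_L2 udag_in.
have -> : eta k = eta k.+1 + (- a) *: (S udag - S (uin k.+1)).
  by rewrite etaS scaleNr addrK.
rewrite (sqr_normDZ ip_inner).
have -> : ip (eta k.+1) (S udag - S (uin k.+1)) =
    - ip (eta k.+1) (S p - S udag) + ip (eta k.+1) (S p - S (uin k.+1)).
  by rewrite -(ipNr ip_inner) -(ipDr ip_inner) opprB addrA subrK.
have Sdiff : `|S p - S (uin k.+1)| <= C * e.
  rewrite distrC -S_sub //; apply: le_trans (S_bounded (inL2_sub hu hp)) _.
  exact: ler_wpM2l.
have CS := ip_le_norm ip_inner (eta k.+1) (S p - S (uin k.+1)).
have m1 := ler_wpM2l (ltW a0) (L2proj_lambdaseq_le Pp).
have m2 := ler_wpM2l (ltW a0) (le_trans CS (ler_wpM2l (normr_ge0 _) Sdiff)).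
have := mulr_ge0 (sqr_ge0 (- a)) (sqr_ge0 `|S udag - S (uin k.+1)|).
lra.
Qed.

Context {eps : nat -> R} {M : R}.
Hypothesis alpha_le : forall {k}, (1 <= k)%N -> alpha k <= M.
Hypothesis eps_gt0 : forall {k}, (1 <= k)%N -> 0 < eps k.
Hypothesis Rterm_summable :
  cvg ([sequence \sum_(1 <= i < N.+1) Rterm alpha eps i]_N @ \oo).
Hypothesis uin_iter : forall {k}, (1 <= k)%N ->
  U (uin k) /\ B_le mu U S Sadj z (alpha k) (lam k.-1) (uin k) (eps k).

Lemma B_le_L2proj {k} : (1 <= k)%N ->
  exists2 p, is_L2proj mu U (lam k) p & L2norm mu (fun x => uin k x - p x) <= eps k.
Proof.
case: k => [//|k] _; have [_ [p [Pp pe]]] := uin_iter (ltn0Sn k).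
exists p; first by rewrite lambdaseqS.
apply: le_trans pe; rewrite ler_peMl ?L2norm_ge0 // lerDl invr_ge0.
exact: ltW (alpha_gt0 (ltn0Sn k)).
Qed.

Theorem inexact_bregman_cvg :
  (fun k => L2norm mu (fun x => uin k x - udag x)) @ \oo --> 0.
Proof.
have /choice[P HP] : forall k, exists p, (1 <= k)%N ->
    is_L2proj mu U (lam k) p /\ L2norm mu (fun x => uin k x - p x) <= eps k.
  move=> k; have [->|k1] := posnP k; first by exists udag.
  by have [p Pp pe] := B_le_L2proj k1; exists p.
pose c k := L2norm mu (fun x => P k x - udag x) ^+ 2.
have [L sum_le] := partial_sums_div_bounded (@alpha_gt0) (@eps_gt0) Rterm_summable.
have M_ge0 : 0 <= M := le_trans (ltW (alpha_gt0 (ltnSn 0))) (alpha_le (ltnSn 0)).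
have c_cvg0 : c @ \oo --> 0.
  apply: (@descent_cvg0 _ (fun k => `|eta k|) (fun k => (alpha k)^-1)
    (fun k => C * ((alpha k)^-1 * eps k)) c M (C * L)) => //.
  - by move=> k k1; rewrite ler_pdivlMr ?alpha_gt0 // mul1r alpha_le.
  - move=> k k1.
    by rewrite !mulr_ge0 ?invr_ge0 ?(ltW (alpha_gt0 k1)) ?(ltW (eps_gt0 k1)).
  - by move=> k; exact: sqr_ge0.
  - by move=> n; rewrite -mulr_sumr; apply: ler_wpM2l.
  - move=> k k1; have [Pk pe] := HP k k1.
    exact: eta_descent k1 Pk (U_L2 (uin_iter k1).1) pe.
apply: (@cvg0_of_sqr_le _ _ (fun k => 2 * M * Rterm alpha eps k + 2 * c k)).
- by move=> k; exact: L2norm_ge0.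
- near=> k; have k1 : (1 <= k)%N by near: k; exact: nbhs_infty_ge.
  have [Pk pe] := HP k k1; have hu := U_L2 (uin_iter k1).1.
  apply: le_trans (L2norm_sqr_sub_le hu (U_L2 Pk.1) (U_L2 udag_in)) _.
  have := sqr_eps_le_Rterm (@alpha_gt0) (@eps_gt0) _ k1 (alpha_le k1).
  have : L2norm mu (fun x => uin k x - P k x) ^+ 2 <= eps k ^+ 2.
    by have e0 := ltW (eps_gt0 k1); rewrite ler_sqr ?nnegrE ?L2norm_ge0.
  rewrite /c; lra.
- rewrite -(addr0 0) -[X in _ --> X + _](mulr0 (2 * M)) -[X in _ --> _ + X](mulr0 2).
  apply: cvgD; apply: cvgM; [exact: cvg_cst | exact: partial_sums_cvg_cvg0 Rterm_summable
                             | exact: cvg_cst | exact: c_cvg0].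
Unshelve. all: by end_near.
Qed.

End InexactBregman.

Theorem corollary4p2 (d : measure_display) (T : measurableType d) (R : realType)
  (mu : {finite_measure set T -> \bar R})
  (Y : completeNormedModType R) (ip : Y -> Y -> R)
  (S : (T -> R) -> Y) (Sadj : Y -> (T -> R)) (z : Y)
  (ua ub : T -> R) (udag : T -> R)
  (alpha eps : nat -> R) (uin : nat -> (T -> R)) :
  is_inner_product ip ->
  L2_bounded_linear mu S ->
  is_adjoint mu ip S Sadj ->
  inLinfty mu ua -> inLinfty mu ub -> {ae mu, forall x, ua x <= ub x} ->
  (* u^dagger solves min_{u in U_ad} 1/2 ||S u - z||^2 *)
  Uad mu ua ub udag ->
  (forall u, Uad mu ua ub u ->
     2^-1 * `|S udag - z| ^+ 2 <= 2^-1 * `|S u - z| ^+ 2) ->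
  (* source condition *)
  (exists w : Y, is_L2proj mu (Uad mu ua ub) (Sadj w) udag) ->
  (* (alpha_k)_{k>=1} bounded positive, (eps_k)_{k>=1} positive *)
  (forall k, (1 <= k)%N -> 0 < alpha k) ->
  (exists M : R, forall k, (1 <= k)%N -> alpha k <= M) ->
  (forall k, (1 <= k)%N -> 0 < eps k) ->
  cvg ([sequence \sum_(1 <= i < N.+1) Rterm alpha eps i]_N @ \oo) ->
  (* inexact Bregman iteration (with S_h = S) *)
  is_L2proj mu (Uad mu ua ub) (fun _ => 0) (uin 0%N) ->
  (forall k, (1 <= k)%N ->
     Uad mu ua ub (uin k) /\
     B_le mu (Uad mu ua ub) S Sadj z (alpha k)
          (lambdaseq S Sadj z alpha uin k.-1) (uin k) (eps k)) ->
  (fun k => L2norm mu (fun x => uin k x - udag x)) @ \oo --> 0.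
Proof.
(* The L^infty bounds and the starting point uin 0 play no role: U_ad is convex
   for arbitrary ua, ub, and uin 0 never enters lambdaseq. *)
move=> ip_inner [S_linear [C S_bounded]] Sadj_adjoint _ _ _ udag_in udag_opt
  [w source] alpha_gt0 [M alpha_le] eps_gt0 Rterm_summable _ uin_iter.
have S_bounded' f : inL2 mu f -> `|S f| <= `|C| * L2norm mu f.
  move=> hf; apply: le_trans (S_bounded f hf) _.
  by rewrite ler_wpM2r ?L2norm_ge0 ?ler_norm.
have udag_min u : Uad mu ua ub u -> `|S udag - z| <= `|S u - z|.
  by move/udag_opt; rewrite ler_pM2l ?invr_gt0 // ler_sqr ?nnegrE.
exact: (inexact_bregman_cvg ip_inner S_linear Sadj_adjoint (Uad_inL2 ua ub)
  (Uad_convex ua ub) udag_in udag_min source alpha_gt0 (normr_ge0 C) S_bounded'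
  alpha_le eps_gt0 Rterm_summable uin_iter).
Qed.
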